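(* For every positive integer $k$, $$4k-2 < r_<(NM_k, K_3) \leq 6k.$$
   Context: An ordered graph on $[N]$ is a graph with vertex set $\{1,\dots,N\}$ equipped with the natural order. Given a red/blue coloring of the edges of the complete graph on $[N]$, a red (ordered) copy of an ordered graph $G$ on $[p]$ is a strictly increasing map $\varphi:[p]\to[N]$ such that $\varphi(u)\varphi(v)$ is red for every edge $uv$ of $G$. The ordered Ramsey number $r_<(G,K_3)$ is the smallest $N$ such that every red/blue coloring of the edges of the complete graph on $[N]$ contains either a red ordered copy of $G$ or a blue triangle. The nested matching $NM_k$ is the ordered graph on $[2k]$ in which $\{i,j\}$ is an edge if and only if $i+j=2k+1$. *)

From mathcomp Require Import all_boot.

(* Ordered graphs on [N] = {1,...,N}; vertices are naturals.
   A red/blue colouring of the edges of K_N is a function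
   c : nat -> nat -> bool, where the colour of the edge {a,b} with a < b
   is c a b (true = red, false = blue); values c a b with a >= b are ignored. *)
Definition red (c : nat -> nat -> bool) (a b : nat) : bool :=
  if a < b then c a b else c b a.

Definition NM_edge (k i j : nat) : bool := (i != j) && (i + j == 2 * k + 1).

Definition red_copy_NM (k N : nat) (c : nat -> nat -> bool) : Prop :=
  exists phi : nat -> nat,
    (forall u, 1 <= u <= 2 * k -> 1 <= phi u <= N) /\
    (forall u v, 1 <= u -> u < v -> v <= 2 * k -> phi u < phi v) /\
    (forall u v, 1 <= u <= 2 * k -> 1 <= v <= 2 * k -> NM_edge k u v ->
       red c (phi u) (phi v)).

Definition blue_triangle (N : nat) (c : nat -> nat -> bool) : Prop :=
  exists a b d, [/\ 1 <= a, a < b, b < d, d <= N &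
    [/\ ~~ red c a b, ~~ red c a d & ~~ red c b d]].

Definition arrows_NM_K3 (k N : nat) : Prop :=
  forall c : nat -> nat -> bool, red_copy_NM k N c \/ blue_triangle N c.

Definition is_ramsey_NM_K3 (k r : nat) : Prop :=
  arrows_NM_K3 k r /\ forall N, N < r -> ~ arrows_NM_K3 k N.

From Stdlib Require Import Classical.
From mathcomp Require Import all_boot zify.

(* Lower bound: colour red exactly the edges inside [1, 2k-1] and inside
   [2k, 4k-2].  The blue graph is bipartite, and the outermost edge of a red
   NM_k spans 2k vertices, so it cannot lie inside either red clique.

   Upper bound: in a colouring of [6k] without blue triangle, the blue
   neighbourhood of a vertex is a red clique, so a blue degree of 2k gives a
   red NM_k at once.  Otherwise every red degree is at least 4k, so there are
   at least 12k^2 red edges, while their endpoint sums take at most 12k+2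
   values: some k red edges {v, s - v} share the sum s, and edges with a
   common sum are automatically nested. *)

Lemma sum_nat_of_bool {T : Type} (r : seq T) (p : pred T) : \sum_(x <- r) p x = count p r.
Proof. by rewrite -sumn_count sumnE big_map. Qed.

Lemma count_increasing_enum {r : seq nat} {p : pred nat} {K : nat} :
  sorted ltn r -> K <= count p r ->
  exists a : nat -> nat, (forall t, t < K -> p (a t) && (a t \in r)) /\
    {in [pred t | t < K] &, {homo a : t t' / t < t'}}.
Proof.
move=> r_sorted; rewrite -size_filter => K_le.
have sorted_p : sorted ltn (filter p r) by apply: sorted_filter => //; exact: ltn_trans.
exists (nth 0 (filter p r)); split.
- by move=> t lt_tK; rewrite -mem_filter mem_nth // (leq_trans lt_tK).
- move=> t t' lt_tK lt_t'K; apply: (sorted_ltn_nth ltn_trans) => //; rewrite inE.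
  + exact: leq_trans lt_tK K_le.
  + exact: leq_trans lt_t'K K_le.
Qed.

Lemma increasing_gap (f : nat -> nat) m n :
  (forall u v, m <= u -> u < v -> v <= n -> f u < f v) ->
  m <= n -> f m + (n - m) <= f n.
Proof.
elim: n => [|n IH] f_incr le_mn; first by move: le_mn; rewrite leqn0 => /eqP ->; rewrite addn0.
move: le_mn; rewrite leq_eqVlt => /predU1P[-> | lt_mn]; first by rewrite subnn addn0.
have := IH (fun u v hu huv hv => f_incr u v hu huv (leqW hv)) lt_mn.
have := f_incr n n.+1 lt_mn (ltnSn n) (leqnn _); lia.
Qed.

Section Antidiagonal.

Variables (R : Type) (idx : R) (op : Monoid.com_law idx).

Lemma big_antidiagonal a b (F : nat -> nat -> R) :
  \big[op/idx]_(a <= i < b) \big[op/idx]_(a <= j < b) F i j =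
  \big[op/idx]_(0 <= s < 2 * b)
     \big[op/idx]_(a <= i < b | (i <= s) && (a <= s - i < b)) F i (s - i).
Proof.
transitivity (\big[op/idx]_(a <= i < b) \big[op/idx]_(a <= j < b)
                \big[op/idx]_(0 <= s < 2 * b) if s == i + j then F i j else idx).
  apply: eq_big_nat => i /andP[_ lt_ib]; apply: eq_big_nat => j /andP[_ lt_jb].
  by rewrite -big_mkcond big_nat1_eq ifT //; lia.
under eq_bigr do rewrite exchange_big_nat.
rewrite exchange_big_nat; apply: eq_bigr => s _; rewrite [RHS]big_mkcond; apply: eq_bigr => i _.
rewrite -big_mkcond; case: (leqP i s) => [le_is | lt_si] /=.
- by rewrite (eq_bigl (pred1 (s - i))) ?big_nat1_eq // => j; apply/eqP/eqP; lia.
- by rewrite big_pred0 // => j; apply/eqP; lia.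
Qed.

End Antidiagonal.

Section Colouring.

Variable c : nat -> nat -> bool.

Lemma red_sym a b : red c a b = red c b a.
Proof. by rewrite /red; case: ltngtP => // ->. Qed.

Lemma red_copy_NM_of_clique k N (a : nat -> nat) :
  (forall t, t < 2 * k -> 1 <= a t <= N) ->
  {in [pred t | t < 2 * k] &, {homo a : t t' / t < t'}} ->
  (forall t t', t < t' < 2 * k -> red c (a t) (a t')) ->
  red_copy_NM k N c.
Proof.
move=> a_range a_incr a_red; exists (fun u => a u.-1); split; [|split].
- by move=> u u_range; apply: a_range; lia.
- by move=> u v u_pos lt_uv v_le; apply: a_incr; rewrite ?inE; lia.
- move=> u v u_range v_range /andP[neq_uv _].
  case: (ltngtP u v) => [lt_uv | lt_vu | eq_uv]; last by rewrite eq_uv eqxx in neq_uv.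
  + by apply: a_red; lia.
  + by rewrite red_sym; apply: a_red; lia.
Qed.

Lemma red_copy_NM_of_nested_edges k N S (a : nat -> nat) :
  (forall t, t < k ->
     [/\ 1 <= a t, a t < S - a t, S - a t <= N & red c (a t) (S - a t)]) ->
  {in [pred t | t < k] &, {homo a : t t' / t < t'}} ->
  red_copy_NM k N c.
Proof.
move=> a_nested a_incr; have a_mono := ltnW_homo_in a_incr.
exists (fun u => if u <= k then a u.-1 else S - a (2 * k - u)); split; [|split].
- move=> u u_range; case: ifP => le_uk.
  + by have [] := a_nested u.-1 ltac:(lia); lia.
  + by have [] := a_nested (2 * k - u) ltac:(lia); lia.
- move=> u v u_pos lt_uv v_le; case: ifP => le_uk; case: ifP => le_vk; try lia.
  + by apply: a_incr; rewrite ?inE; lia.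
  + have [_ a_lt_mid _ _] := a_nested k.-1 ltac:(lia).
    have le_u : a u.-1 <= a k.-1 by apply: a_mono; rewrite ?inE; lia.
    have le_v : a (2 * k - v) <= a k.-1 by apply: a_mono; rewrite ?inE; lia.
    lia.
  + have [_ a_lt _ _] := a_nested (2 * k - u) ltac:(lia).
    have := a_incr (2 * k - v) (2 * k - u); rewrite !inE; lia.
- move=> u v u_range v_range /andP[_ /eqP sum_uv].
  case: ifP => le_uk; case: ifP => le_vk; try lia.
  + have -> : 2 * k - v = u.-1 by lia.
    by have [] := a_nested u.-1 ltac:(lia).
  + have -> : 2 * k - u = v.-1 by lia.
    by rewrite red_sym; have [] := a_nested v.-1 ltac:(lia).
Qed.

Lemma red_of_no_blue_triangle N x y z : ~ blue_triangle N c ->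
  1 <= x <= N -> 1 <= y -> y < z -> z <= N -> x != y -> x != z ->
  ~~ red c x y -> ~~ red c x z -> red c y z.
Proof.
move=> no_blue x_range y_pos lt_yz z_le neq_xy neq_xz blue_xy blue_xz.
apply/negPn/negP => blue_yz; apply: no_blue.
case: (ltngtP x y) => [lt_xy | lt_yx | eq_xy]; last by rewrite eq_xy eqxx in neq_xy.
- by exists x, y, z; split; try lia.
- case: (ltngtP x z) => [lt_xz | lt_zx | eq_xz]; last by rewrite eq_xz eqxx in neq_xz.
  + by exists y, x, z; rewrite red_sym; split; try lia.
  + by exists y, z, x; rewrite ![red c _ x]red_sym; split; try lia.
Qed.

End Colouring.

Section Degrees.

Variables (c : nat -> nat -> bool) (n : nat).

Definition red_degree v := \sum_(1 <= w < n.+1) ((w != v) && red c v w).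

Definition blue_degree v := \sum_(1 <= w < n.+1) ((w != v) && ~~ red c v w).

Definition red_pairs_of_sum s := \sum_(1 <= v < n.+1) ((v < s - v <= n) && red c v (s - v)).

Lemma red_degree_add_blue_degree v : 1 <= v <= n -> red_degree v + blue_degree v = n.-1.
Proof.
move=> v_range; rewrite -big_split /=.
transitivity (count (predC (pred1 v)) (index_iota 1 n.+1)).
  by rewrite -sum_nat_of_bool; apply: eq_bigr => w _ /=; case: (w != v); case: red.
have := count_predC (pred1 v) (index_iota 1 n.+1).
rewrite count_uniq_mem ?iota_uniq // mem_index_iota v_range size_iota.
lia.
Qed.

Lemma sum_red_degree :
  \sum_(1 <= v < n.+1) red_degree v = 2 * \sum_(0 <= s < 2 * n.+1) red_pairs_of_sum s.
Proof.
set E := \sum_(1 <= v < n.+1) \sum_(1 <= w < n.+1) ((v < w) && red c v w).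
have -> : \sum_(0 <= s < 2 * n.+1) red_pairs_of_sum s = E.
  rewrite /E big_antidiagonal; apply: eq_bigr => s _; rewrite big_mkcond.
  apply: eq_bigr => v _; case: red; rewrite ?andbT ?andbF ?if_same //.
  by case: ifP; lia.
have E_sym : E = \sum_(1 <= v < n.+1) \sum_(1 <= w < n.+1) ((w < v) && red c v w).
  by rewrite /E exchange_big_nat; apply: eq_bigr => v _; apply: eq_bigr => w _; rewrite red_sym.
rewrite mul2n -addnn {1}E_sym /E -!big_split /=.
apply: eq_bigr => v _; rewrite -big_split; apply: eq_bigr => w _ /=.
by case: (ltngtP w v) => [| | ->]; rewrite ?eqxx ?addn0.
Qed.

Lemma red_copy_NM_of_blue_degree k v : ~ blue_triangle n c ->
  1 <= v <= n -> 2 * k <= blue_degree v -> red_copy_NM k n c.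
Proof.
move=> no_blue v_range; rewrite /blue_degree sum_nat_of_bool => big_blue.
have [a [a_blue a_incr]] := count_increasing_enum (iota_ltn_sorted 1 _) big_blue.
have {}a_blue t : t < 2 * k -> [/\ 1 <= a t <= n, a t != v & ~~ red c v (a t)].
  by move/a_blue; rewrite mem_iota => /andP[/andP[-> ->] a_range]; split=> //; lia.
apply: (@red_copy_NM_of_clique c k n a) => // [t /a_blue[] // | t t' /andP[lt_tt' lt_t'k]].
have [t_range neq_tv blue_t] := a_blue t (ltn_trans lt_tt' lt_t'k).
have [t'_range neq_t'v blue_t'] := a_blue t' lt_t'k.
have a_lt : a t < a t' by apply: a_incr; rewrite ?inE //; lia.
by apply: (@red_of_no_blue_triangle c n v) => //; rewrite 1?eq_sym //; lia.
Qed.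

Lemma red_copy_NM_of_red_pairs_of_sum k s :
  k <= red_pairs_of_sum s -> red_copy_NM k n c.
Proof.
rewrite /red_pairs_of_sum sum_nat_of_bool => many_pairs.
have [a [a_pair a_incr]] := count_increasing_enum (iota_ltn_sorted 1 _) many_pairs.
apply: (@red_copy_NM_of_nested_edges c k n s a) => // t /a_pair.
by rewrite mem_iota => /andP[/andP[/andP[lt_pair le_n] red_pair] a_range]; split=> //; lia.
Qed.

Lemma leq_sum_red_pairs_of_sum d :
  (forall v, 1 <= v <= n -> blue_degree v <= d) ->
  n * (n.-1 - d) <= 2 * \sum_(0 <= s < 2 * n.+1) red_pairs_of_sum s.
Proof.
move=> blue_le; rewrite -sum_red_degree -[X in X * _](subn1 n.+1) -sum_nat_const_nat.
rewrite big_seq [leqRHS]big_seq; apply: leq_sum => v; rewrite mem_index_iota => v_range.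
have := @red_degree_add_blue_degree v ltac:(lia); have := blue_le v ltac:(lia); lia.
Qed.

End Degrees.

Definition two_red_cliques m (a b : nat) : bool := (a < m) == (b < m).

Lemma two_red_cliques_no_blue_triangle m N : ~ blue_triangle N (two_red_cliques m).
Proof.
case=> a [b [d [_ lt_ab lt_bd _]]]; rewrite /red lt_ab lt_bd (ltn_trans lt_ab lt_bd).
by rewrite /two_red_cliques; case: (a < m); case: (b < m); case: (d < m); case.
Qed.

Lemma two_red_cliques_no_red_copy k N : 0 < k -> N <= 4 * k - 2 ->
  ~ red_copy_NM k N (two_red_cliques (2 * k)).
Proof.
move=> k_pos N_le [phi [phi_range [phi_incr phi_red]]].
have gap : phi 1 + (2 * k - 1) <= phi (2 * k) by apply: increasing_gap => //; lia.
have first_last : NM_edge k 1 (2 * k) by rewrite /NM_edge; apply/andP; split; apply/eqP; lia.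
have := phi_red 1 (2 * k) ltac:(lia) ltac:(lia) first_last.
have := phi_range 1 ltac:(lia); have := phi_range (2 * k) ltac:(lia).
rewrite /red /two_red_cliques phi_incr //; last by lia.
by case: (ltnP (phi 1) (2 * k)); case: (ltnP (phi (2 * k)) (2 * k)); lia.
Qed.

Lemma not_arrows_NM_K3 k N : 0 < k -> N <= 4 * k - 2 -> ~ arrows_NM_K3 k N.
Proof.
move=> k_pos N_le /(_ (two_red_cliques (2 * k))) [].
- exact: two_red_cliques_no_red_copy.
- exact: two_red_cliques_no_blue_triangle.
Qed.

Lemma arrows_NM_K3_6k k : 0 < k -> arrows_NM_K3 k (6 * k).
Proof.
move=> k_pos c; have [|no_blue] := classic (blue_triangle (6 * k) c); [by right | left].
have [/hasP[v] | /hasPn small_blue] :=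
  boolP (has (fun v => 2 * k <= blue_degree c (6 * k) v) (index_iota 1 (6 * k).+1)).
  by rewrite mem_index_iota; exact: red_copy_NM_of_blue_degree.
have [/hasP[s _] | /hasPn few_pairs] :=
  boolP (has (fun s => k <= red_pairs_of_sum c (6 * k) s) (index_iota 0 (2 * (6 * k).+1))).
  exact: red_copy_NM_of_red_pairs_of_sum.
have blue_le v : 1 <= v <= 6 * k -> blue_degree c (6 * k) v <= (2 * k).-1.
  by move=> v_range; have := small_blue v; rewrite mem_index_iota v_range -ltnNge; lia.
have := leq_sum_red_pairs_of_sum c (6 * k) _ blue_le.
have : \sum_(0 <= s < 2 * (6 * k).+1) red_pairs_of_sum c (6 * k) s <=
         \sum_(0 <= s < 2 * (6 * k).+1) k.-1.
  rewrite big_seq [leqRHS]big_seq; apply: leq_sum => s /few_pairs.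
  by rewrite -ltnNge; lia.
(* 6k * 4k red-degree sum against 2 * (12k + 2) * (k - 1) *)
rewrite sum_nat_const_nat subn0; nia.
Qed.

Lemma ex_minimal (P : nat -> Prop) n : P n -> exists m, P m /\ forall j, j < m -> ~ P j.
Proof.
elim/ltn_ind: n => n IH Pn.
have [[j [lt_jn Pj]] | no_smaller] := classic (exists j, j < n /\ P j); first exact: IH j lt_jn Pj.
by exists n; split=> // j lt_jn Pj; apply: no_smaller; exists j.
Qed.

Theorem proposition2p1 (k : nat) : 0 < k ->
  exists r, is_ramsey_NM_K3 k r /\ 4 * k - 2 < r <= 6 * k.
Proof.
move=> k_pos; have arrows_6k := arrows_NM_K3_6k k k_pos.
have [r [arrows_r minimal_r]] := ex_minimal _ _ arrows_6k.
exists r; split=> //; apply/andP; split.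
- by rewrite ltnNge; apply/negP => r_le; exact: (not_arrows_NM_K3 _ _ k_pos r_le).
- by rewrite leqNgt; apply/negP => lt_r; exact: minimal_r _ lt_r arrows_6k.
Qed.
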